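(* Let $U$ be a Banach space and $F$ a Banach lattice with partial order $\leqslant_F$. Let $A\colon U\to F$ be a linear, continuous and injective operator, let $f\in F$ and let $\bar u\in U$ be the exact solution of $A\bar u=f$. Let $(f^l_n)_{n\in\mathbb N}$, $(f^u_n)_{n\in\mathbb N}$ be sequences in $F$ such that for all $n$: $f^l_{n+1}\geqslant_F f^l_n$, $f^u_{n+1}\leqslant_F f^u_n$, $f^l_n\leqslant_F f\leqslant_F f^u_n$, and $\|f^l_n-f^u_n\|\to 0$ as $n\to\infty$. (There are no errors in the operator $A$.) Define the feasible sets $$U_n=\{u\in U:\ f^l_n\leqslant_F Au\leqslant_F f^u_n\}.$$ Let $R\colon U\to\mathbb R\cup\{+\infty\}$ be a functional satisfying either (I) $R$ is bounded from below on $U$, $R$ is lower semi-continuous, and the level sets $\{u: R(u)\leqslant C\}$ ($C$ constant) are sequentially compact in $U$ in the norm topology; or (II) $R$ is bounded from below on $U$, $R$ is weakly lower semi-continuous, the level sets $\{u: R(u)\leqslant C\}$ are weakly sequentially compact in $U$, and $R$ has the Radon–Riesz property. Let $u_n=\operatorname{argmin}_{u\in U_n}R(u)$. Then $u_n\to\bar u$ strongly in $U$ and $R(u_n)\to R(\bar u)$.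
   Context: A functional $R\colon U\to\mathbb R$ has the Radon–Riesz property if for any sequence $u_n\in U$, weak convergence $u_n\rightharpoonup u_0$ together with convergence of values $R(u_n)\to R(u_0)$ implies strong convergence $u_n\to u_0$. A Banach lattice is a vector lattice with a complete monotone norm ($|x|\leqslant|y|\Rightarrow\|x\|\leqslant\|y\|$). *)

From HB Require Import structures.
From mathcomp Require Import all_boot all_order all_algebra.
From mathcomp Require Import all_classical all_reals all_analysis.
Set Implicit Arguments. Unset Strict Implicit. Unset Printing Implicit Defensive.
Import Order.TTheory GRing.Theory Num.Theory.
Import numFieldNormedType.Exports.
Local Open Scope classical_set_scope.
Local Open Scope ring_scope.

Definition is_sup2 (F : Type) (le : F -> F -> Prop) (x y s : F) : Prop :=
  le x s /\ le y s /\ (forall t, le x t -> le y t -> le s t).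

(* (F, le) with the norm of F is a Banach lattice:
   le is a partial order compatible with the vector structure (ordered
   vector space), every pair has a supremum (vector lattice), and the norm
   is monotone: |x| <= |y| -> ||x|| <= ||y||, where |x| = sup(x, -x).
   Completeness of the norm is carried by F : completeNormedModType R. *)
Record banach_lattice_order (R : realType) (F : normedModType R)
    (le : F -> F -> Prop) : Prop := {
  bl_refl : forall x, le x x;
  bl_antisym : forall x y, le x y -> le y x -> x = y;
  bl_trans : forall x y z, le x y -> le y z -> le x z;
  bl_add : forall x y z, le x y -> le (x + z) (y + z);
  bl_scale : forall (a : R) x y, 0 <= a -> le x y -> le (a *: x) (a *: y);
  bl_sup : forall x y, exists s, is_sup2 le x y s;
  bl_norm_monotone : forall x y ax ay, is_sup2 le x (- x) ax ->
      is_sup2 le y (- y) ay -> le ax ay -> `|x| <= `|y|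
}.

Definition weak_cvg (R : realType) (U : normedModType R) (u : nat -> U)
    (u0 : U) : Prop :=
  forall phi : {linear U -> R^o}, continuous phi ->
    (fun n => phi (u n)) @ \oo --> phi u0.

Definition subsequence (phi : nat -> nat) : Prop :=
  forall m n, (m < n)%N -> (phi m < phi n)%N.

Local Open Scope ereal_scope.

Definition bounded_below (R : realType) (U : Type) (J : U -> \bar R) : Prop :=
  exists c : R, forall u, c%:E <= J u.

Definition level_sets_seq_compact (R : realType) (U : normedModType R)
    (J : U -> \bar R) : Prop :=
  forall (C : R) (u : nat -> U), (forall n, J (u n) <= C%:E) ->
    exists phi u0, subsequence phi /\ J u0 <= C%:E /\
      (u \o phi) @ \oo --> u0.

Definition level_sets_weak_seq_compact (R : realType) (U : normedModType R)
    (J : U -> \bar R) : Prop :=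
  forall (C : R) (u : nat -> U), (forall n, J (u n) <= C%:E) ->
    exists phi u0, subsequence phi /\ J u0 <= C%:E /\
      weak_cvg (u \o phi) u0.

Definition weakly_lsc (R : realType) (U : normedModType R)
    (J : U -> \bar R) : Prop :=
  forall (u : nat -> U) u0, weak_cvg u u0 -> J u0 <= limn_einf (J \o u).

Definition radon_riesz (R : realType) (U : normedModType R)
    (J : U -> \bar R) : Prop :=
  forall (u : nat -> U) u0, weak_cvg u u0 ->
    (J \o u) @ \oo --> J u0 -> u @ \oo --> u0.

(* Any two feasible points of the n-th problem lie in the order interval
   [f^l_n, f^u_n], so monotonicity of the lattice norm gives
   ||A u_n - f|| <= ||f^u_n - f^l_n|| -> 0; and since ubar is feasible,
   R(u_n) <= R(ubar), so all u_n lie in one level set of R.  Hence every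
   subsequence has a further subsequence converging (strongly in case (I),
   weakly in case (II)) to some u0.  Then A u0 = f: by continuity of A, and in
   case (II) because weak limits are unique, which is the Hahn-Banach theorem
   (proved via Zorn's lemma by extending norm-dominated functionals one
   direction at a time).  Injectivity gives u0 = ubar.  In case (II),
   R(ubar) <= liminf R(u_n) <= R(ubar) forces R(u_n) -> R(ubar), and the
   Radon-Riesz property turns weak into strong convergence.  The same squeeze
   gives R(u_n) -> R(ubar) in both cases. *)

From HB Require Import structures.
From mathcomp Require Import all_boot all_order all_algebra.
From mathcomp Require Import all_classical all_reals all_analysis.
From mathcomp Require Import lra.
Set Implicit Arguments. Unset Strict Implicit. Unset Printing Implicit Defensive.
Import Order.TTheory GRing.Theory Num.Theory.
Import numFieldNormedType.Exports.
Local Open Scope classical_set_scope.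
Local Open Scope ring_scope.

Section HahnBanach.
Context {R : realType} {F : normedModType R}.
Implicit Types (G : set (F * R)) (x y z : F) (a b c g h k t : R).

(* The graph of a linear functional on a subspace of [F], bounded by the norm. *)
Definition dominated_graph G : Prop :=
  [/\ forall x a b, G (x, a) -> G (x, b) -> a = b,
      forall x y a b, G (x, a) -> G (y, b) -> G (x + y, a + b),
      forall k x a, G (x, a) -> G (k *: x, k * a) &
      forall x a, G (x, a) -> a <= `|x|].

Lemma dominated_graph_bigcup (C : set (set (F * R))) :
  C `<=` dominated_graph -> total_on C subset ->
  dominated_graph (\bigcup_(X in C) X).
Proof.
move=> Cdom Ctot; split.
- move=> x a b [X CX Xa] [Y CY Yb].
  have [XY|YX] := Ctot _ _ CX CY.
  + by have [Df _ _ _] := Cdom _ CY; exact: Df (XY _ Xa) Yb.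
  + by have [Df _ _ _] := Cdom _ CX; exact: Df Xa (YX _ Yb).
- move=> x y a b [X CX Xa] [Y CY Yb].
  have [XY|YX] := Ctot _ _ CX CY.
  + by have [_ D _ _] := Cdom _ CY; exists Y => //; exact: D (XY _ Xa) Yb.
  + by have [_ D _ _] := Cdom _ CX; exists X => //; exact: D Xa (YX _ Yb).
- by move=> k x a [X CX Xa]; have [_ _ D _] := Cdom _ CX; exists X => //; apply: D.
- by move=> x a [X CX Xa]; have [_ _ _ D] := Cdom _ CX; exact: D Xa.
Qed.

Lemma dominated_graph_line x : x != 0 ->
  dominated_graph [set (k *: x, k * `|x|) | k in [set: R]].
Proof.
move=> xN0; split.
- move=> _ a b [k _ [<- <-]] [k' _ [ekk' <-]].
  have /eqP : (k - k') *: x = 0 by rewrite scalerBl ekk' subrr.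
  by rewrite scaler_eq0 (negbTE xN0) orbF subr_eq0 => /eqP ->.
- move=> _ _ _ _ [k _ [<- <-]] [k' _ [<- <-]].
  by exists (k + k') => //; rewrite scalerDl mulrDl.
- by move=> c _ _ [k _ [<- <-]]; exists (c * k) => //; rewrite scalerA mulrA.
- move=> _ _ [k _ [<- <-]]; rewrite normrZ.
  by apply: ler_wpM2r => //; exact: ler_norm.
Qed.

Lemma dominated_graph0 G x a : dominated_graph G -> G (x, a) -> G (0, 0).
Proof. by move=> [_ _ D _] /(D 0); rewrite scale0r mul0r. Qed.

(* Any [c] in this nonempty interval extends [G] to [x1] (Hahn-Banach step). *)
Lemma dominated_graph_gap G x1 : dominated_graph G -> G (0, 0) ->
  exists c, (forall y g, G (y, g) -> g - `|y - x1| <= c) /\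
            (forall z h, G (z, h) -> c <= `|z + x1| - h).
Proof.
move=> [_ Gadd _ Gdom] G00.
pose S := [set s | exists y g, G (y, g) /\ s = g - `|y - x1|].
have S_ub : ubound S `|x1|.
  move=> _ [y [g [Gyg ->]]]; rewrite lerBlDr (le_trans (Gdom _ _ Gyg)) //.
  by rewrite -[X in `|X|](subrK x1 y) addrC ler_normD.
have S0 : S !=set0 by exists (0 - `|0 - x1|), 0, 0.
exists (sup S); split=> [y g Gyg|z h Gzh].
  by apply: ub_le_sup; [exists `|x1| | exists y, g].
apply: ge_sup => // _ [y [g [Gyg ->]]].
rewrite lerBrDr addrAC lerBlDr (le_trans (Gdom _ _ (Gadd _ _ _ _ Gyg Gzh))) //.
have -> : y + z = (y - x1) + (z + x1) by rewrite addrA addrAC subrK.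
by rewrite [X in _ <= X]addrC ler_normD.
Qed.

Definition graph_adjoin G x1 c : set (F * R) :=
  [set p | exists y g t, G (y, g) /\ p = (y + t *: x1, g + t * c)].

Lemma graph_adjoin_dominated G x1 c : dominated_graph G ->
  (forall y g, G (y, g) -> g - `|y - x1| <= c) ->
  (forall z h, G (z, h) -> c <= `|z + x1| - h) ->
  forall y g t, G (y, g) -> g + t * c <= `|y + t *: x1|.
Proof.
move=> [_ _ Gscale Gdom] cge cle y g t Gyg.
have [tneg|tpos|->] := ltgtP t 0.
- have nt_pos : 0 < - t by rewrite oppr_gt0.
  have := cge _ _ (Gscale (- t)^-1 _ _ Gyg).
  rewrite lerBlDr => /(ler_wpM2l (ltW nt_pos)).
  rewrite mulrDr mulrA mulfV ?gt_eqF // mul1r mulNr.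
  have -> : - t * `|(- t)^-1 *: y - x1| = `|y + t *: x1|.
    rewrite -{1}(ger0_norm (ltW nt_pos)) -normrZ scalerBr scalerA.
    by rewrite mulfV ?gt_eqF // scale1r scaleNr opprK.
  lra.
- have := cle _ _ (Gscale t^-1 _ _ Gyg).
  rewrite lerBrDr => /(ler_wpM2l (ltW tpos)).
  rewrite mulrDr mulrA mulfV ?gt_eqF // mul1r.
  have -> : t * `|t^-1 *: y + x1| = `|y + t *: x1|.
    rewrite -[t in t * _]ger0_norm ?ltW // -normrZ scalerDr scalerA.
    by rewrite mulfV ?gt_eqF // scale1r addrC.
  lra.
- by rewrite scale0r mul0r !addr0; exact: Gdom.
Qed.

Lemma dominated_graph_adjoin G x1 c : dominated_graph G ->
  (forall a, ~ G (x1, a)) ->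
  (forall y g, G (y, g) -> g - `|y - x1| <= c) ->
  (forall z h, G (z, h) -> c <= `|z + x1| - h) ->
  dominated_graph (graph_adjoin G x1 c).
Proof.
move=> Gdom nGx1 cge cle; have [Gf Gadd Gscale _] := Gdom.
split.
- move=> _ a b [y [g [t [Gyg [-> ->]]]]] [y' [g' [t' [Gyg' [e ->]]]]].
  have [tt'|tt'] := eqVneq t t'.
    subst t'; have eyy' : y = y' := addIr _ e.
    by rewrite -eyy' in Gyg'; rewrite (Gf _ _ _ Gyg Gyg').
  exfalso; apply: (nGx1 ((t - t')^-1 * (g' - g))).
  have -> : x1 = (t - t')^-1 *: (y' - y).
    apply: (scalerI (_ : t - t' != 0)); first by rewrite subr_eq0.
    rewrite scalerA mulfV ?subr_eq0 // scale1r scalerBl.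
    by rewrite -(addKr y (t *: x1)) e addrA addrK addrC.
  apply/Gscale/Gadd => //.
  by have := Gscale (-1) _ _ Gyg; rewrite scaleN1r mulN1r.
- move=> _ _ _ _ [y [g [t [Gyg [-> ->]]]]] [y' [g' [t' [Gyg' [-> ->]]]]].
  exists (y + y'), (g + g'), (t + t'); split; first exact: Gadd.
  by rewrite scalerDl mulrDl !addrA (addrAC y) (addrAC g).
- move=> k _ _ [y [g [t [Gyg [-> ->]]]]].
  exists (k *: y), (k * g), (k * t); split; first exact: Gscale.
  by rewrite scalerDr scalerA mulrDr mulrA.
- move=> _ _ [y [g [t [Gyg [-> ->]]]]].
  exact: graph_adjoin_dominated Gdom cge cle _ _ _ Gyg.
Qed.

Lemma dominated_graph_functional G : dominated_graph G ->
  (forall x, exists a, G (x, a)) ->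
  exists phi : {linear F -> R^o}, continuous phi /\ forall x, G (x, phi x).
Proof.
move=> [Gf Gadd Gscale Gdom] Gtot; have [g Gg] := choice Gtot.
have glin : linear (g : F -> R^o).
  move=> k x y; apply: (Gf (k *: x + y)); first exact: Gg.
  by apply: Gadd; [apply: Gscale|]; exact: Gg.
pose phi := HB.pack_for {linear F -> R^o} (g : F -> R^o)
  (GRing.isLinear.Build _ _ _ _ _ glin).
have g_le x : `|g x| <= `|x|.
  rewrite ler_norml Gdom ?andbT //.
  by have := Gdom _ _ (Gscale (-1) _ _ (Gg x)); rewrite scaleN1r normrN mulN1r lerNl.
exists phi; split => // x; apply/cvgrPdist_lt => e e0; near=> y.
rewrite -raddfB (le_lt_trans (g_le _)) //; near: y; exact: cvgr_dist_lt.
Unshelve. all: by end_near.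
Qed.

Theorem hahn_banach_norming x0 : x0 != 0 ->
  exists phi : {linear F -> R^o}, continuous phi /\ phi x0 = `|x0|.
Proof.
move=> x0N0.
(* [set0] is admitted so that the empty chain has an upper bound. *)
pose P G := dominated_graph G /\ (G = set0 \/ G (x0, `|x0|)).
have [|M [[Mdom MP] Mmax]] := @Zorn_bigcup _ P.
  move=> C CP Ctot; split; first by apply: dominated_graph_bigcup => // G /CP [].
  have [[X CX Xx0]|nX] := pselect (exists2 X, C X & X (x0, `|x0|)).
    by right; exists X.
  left; apply/seteqP; split => // p [X CX Xp].
  have [_ [X0|Xx0]] := CP _ CX; first by move: Xp; rewrite X0.
  by case: nX; exists X.
have Mx0 : M (x0, `|x0|).
  case: MP => // M0; exfalso.
  pose L := [set (k *: x0, k * `|x0|) | k in [set: R]].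
  have Lx0 : L (x0, `|x0|) by exists 1 => //; rewrite scale1r mul1r.
  apply: (Mmax L); last by split; [exact: dominated_graph_line | right].
  by rewrite M0; split => // /(_ _ Lx0).
have M00 := dominated_graph0 Mdom Mx0.
have Mtot x : exists a, M (x, a).
  apply/not_existsP => nMx; have [c [cge cle]] := dominated_graph_gap x Mdom M00.
  apply: (Mmax (graph_adjoin M x c)); last first.
    split; first exact: dominated_graph_adjoin.
    by right; exists x0, `|x0|, 0; rewrite scale0r mul0r !addr0.
  split=> [[y g] Myg|adjoin_sub]; first by exists y, g, 0; rewrite scale0r mul0r !addr0.
  apply: (nMx c); apply: adjoin_sub; exists 0, 0, 1.
  by rewrite add0r scale1r mul1r add0r.
have [phi [phi_cont Mphi]] := dominated_graph_functional Mdom Mtot.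
by exists phi; split => //; have [Mf _ _ _] := Mdom; exact: Mf (Mphi x0) Mx0.
Qed.

End HahnBanach.

Section WeakConvergence.
Context {R : realType}.

Lemma cvg_weak_cvg (U : normedModType R) (v : nat -> U) l :
  v @ \oo --> l -> weak_cvg v l.
Proof. by move=> vl phi phi_cont; exact: cvg_comp vl (phi_cont l). Qed.

Lemma weak_cvg_linear (U F : normedModType R) (A : {linear U -> F}) v l :
  continuous A -> weak_cvg v l -> weak_cvg (A \o v) (A l).
Proof.
move=> A_cont vl chi chi_cont; apply: (vl (chi \o A)).
by move=> x; apply: continuous_comp; [exact: A_cont | exact: chi_cont].
Qed.

Lemma weak_cvg_unique (F : normedModType R) (v : nat -> F) a b :
  weak_cvg v a -> weak_cvg v b -> a = b.
Proof.
move=> va vb; apply/eqP; rewrite -subr_eq0; apply: contraT => abN0.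
have [phi [phi_cont phi_ab]] := hahn_banach_norming abN0.
have phi_eq : phi a = phi b.
  have va' := va _ phi_cont; have vb' := vb _ phi_cont.
  exact: (cvg_unique (@Rhausdorff R) va' vb').
have /eqP : phi (a - b) = 0 by rewrite raddfB /= phi_eq subrr.
by rewrite phi_ab normr_eq0 (negbTE abN0).
Qed.

End WeakConvergence.

Section BanachLattice.
Context {R : realType} {F : normedModType R} {le : F -> F -> Prop}.
Hypothesis hF : banach_lattice_order le.

Lemma banach_lattice_norm_subr_le x y g :
  le 0 x -> le x g -> le 0 y -> le y g -> `|x - y| <= `|g|.
Proof.
(* [x - y] and [y - x] both lie below [g], and [|g| = g]. *)
case: hF => refl _ trans add _ sup mono x0 xg y0 yg.
have subr_le a b : le 0 b -> le (a - b) a.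
  by move=> /(add _ _ (a - b)); rewrite add0r [b + _]addrC subrK.
have g0 : le 0 g := trans _ _ _ x0 xg.
have [s [xy_s [yx_s s_min]]] := sup (x - y) (- (x - y)).
apply: (mono _ _ s g) => //.
- split; first exact: refl.
  split=> //; have := add _ _ (- g) g0; rewrite add0r subrr => Ng0.
  exact: trans Ng0 g0.
- apply: s_min; first exact: trans (subr_le _ _ y0) xg.
  by rewrite opprB; exact: trans (subr_le _ _ x0) yg.
Qed.

Lemma banach_lattice_dist_le l h a b :
  le l a -> le a h -> le l b -> le b h -> `|a - b| <= `|h - l|.
Proof.
case: (hF) => _ _ _ add _ _ _ la ah lb bh.
have sub_le x y : le x y -> le (x - l) (y - l) by exact: add.
have sub0_le x : le l x -> le 0 (x - l) by move/sub_le; rewrite subrr.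
have := banach_lattice_norm_subr_le (sub0_le _ la) (sub_le _ _ ah)
  (sub0_le _ lb) (sub_le _ _ bh).
by rewrite opprB addrA subrK.
Qed.

Lemma banach_lattice_squeeze (lo hi a : nat -> F) b :
  (forall n, le (lo n) (a n) /\ le (a n) (hi n)) ->
  (forall n, le (lo n) b /\ le b (hi n)) ->
  (fun n => `|lo n - hi n|) @ \oo --> (0 : R) -> a @ \oo --> b.
Proof.
move=> a_in b_in gap; apply/cvgrPdist_lt => e e0.
near=> n; have [la ah] := a_in n; have [lb bh] := b_in n.
rewrite (le_lt_trans (banach_lattice_dist_le lb bh la ah)) // distrC.
near: n; have /cvgrPdist_lt /(_ e e0) := gap; apply: filterS => n.
by rewrite sub0r normrN normr_id.
Unshelve. all: by end_near.
Qed.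

End BanachLattice.

Section Subsequences.

Lemma subsequence_ge phi : subsequence phi -> forall n, (n <= phi n)%N.
Proof. by move=> phi_incr; elim=> // n ih; exact: leq_ltn_trans ih (phi_incr _ _ _). Qed.

Lemma subsequence_cvg phi : subsequence phi -> phi @ \oo --> \oo.
Proof.
move=> phi_incr P [N _ NP]; exists N => // n /= Nn; apply: NP.
exact: leq_trans Nn (subsequence_ge phi_incr n).
Qed.

Lemma cvg_subsequences (T : topologicalType) (u : nat -> T) (l : T) :
  (forall phi, subsequence phi ->
     exists2 psi, subsequence psi & (u \o phi \o psi) @ \oo --> l) ->
  u @ \oo --> l.
Proof.
move=> sub_cvg V Vl; apply: contrapT => not_evV.
have bad_after n : {m | ~ V (u m) /\ (n < m)%N}.
  apply/cid; apply: contrapT => /forallNP good; apply: not_evV.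
  by exists n.+1 => // m /= nm; have /not_andP [/contrapT //|] := good m.
have [f [_ f_bad]] := dependent_choice bad_after 0.
have phi_incr : subsequence (f \o S).
  move=> m n; apply: (@homo_ltn _ _ (fun a b => (a < b)%N)) => [? ? ?|i].
    exact: ltn_trans.
  exact: (f_bad i.+1).2.
have [psi _ /(_ V Vl) [N _ NV]] := sub_cvg _ phi_incr.
by have [+ _] := f_bad (psi N); apply; exact: NV N (leqnn N).
Qed.

End Subsequences.

Section ExtendedReals.
Context {R : realType}.
Local Open Scope ereal_scope.

Lemma lee_of_fin_lt (x y : \bar R) :
  (forall a : R, a%:E < x -> a%:E <= y) -> x <= y.
Proof.
case: x => [r| |] // xy.
- by apply/lee_subgt0Pr => e e0; apply: xy; rewrite lte_fin ltrBlDr ltrDl.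
- by rewrite leye_eq; apply/eqP/eqyP => a _; exact/xy/ltry.
- by rewrite leNye.
Qed.

Lemma limn_einf_ge_cvg (v : nat -> \bar R) l :
  l <= limn_einf v -> (forall n, v n <= l) -> v @ \oo --> l.
Proof.
move=> l_inf v_le.
have : (-%E \o v) @ \oo --> - l.
  by apply: limn_esup_le_cvg => [|n]; rewrite ?limn_esupN leeN2.
move/cvgeN; rewrite oppeK; apply: cvg_trans.
by under eq_fun do rewrite /= oppeK.
Qed.

Lemma lower_semicontinuous_le_limn_einf (X : topologicalType) (J : X -> \bar R)
    (v : nat -> X) l :
  lower_semicontinuous J -> v @ \oo --> l -> J l <= limn_einf (J \o v).
Proof.
move=> J_lsc vl; apply: lee_of_fin_lt => a aJ.
have [V Vl VJ] := J_lsc _ _ aJ; have [N _ NV] := vl V Vl.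
rewrite limn_einf_lim; apply: lime_ge; first exact: is_cvg_einfs.
exists N => // n /= Nn; apply: le_ereal_inf_tmp => _ [k /= nk <-].
exact/ltW/VJ/NV/(leq_trans Nn nk).
Qed.

End ExtendedReals.

Section MinimizingSequences.
Context {R : realType} {U F : normedModType R} (A : {linear U -> F}).
Hypotheses (A_cont : continuous A) (A_inj : injective A).
Variables (J : U -> \bar R) (ubar : U).

Lemma level_compact_subseq_cvg (v : nat -> U) (C : R) :
  level_sets_seq_compact J -> (forall n, (J (v n) <= C%:E)%E) ->
  (A \o v) @ \oo --> A ubar ->
  exists2 psi, subsequence psi & (v \o psi) @ \oo --> ubar.
Proof.
move=> J_cpt JvC Av_cvg.
have [psi [u0 [psi_incr [_ vu0]]]] := J_cpt C v JvC.
exists psi => //; suff <- : u0 = ubar by [].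
have Avu0 : (A \o (v \o psi)) @ \oo --> A u0 := cvg_comp _ _ vu0 (@A_cont u0).
have Avubar : (A \o (v \o psi)) @ \oo --> A ubar.
  exact: cvg_comp (subsequence_cvg psi_incr) Av_cvg.
exact/A_inj/(cvg_unique _ Avu0 Avubar).
Qed.

Lemma level_weak_compact_subseq_cvg (v : nat -> U) (C : R) :
  weakly_lsc J -> level_sets_weak_seq_compact J -> radon_riesz J ->
  (forall n, (J (v n) <= J ubar)%E) -> (J ubar <= C%:E)%E ->
  (A \o v) @ \oo --> A ubar ->
  exists2 psi, subsequence psi & (v \o psi) @ \oo --> ubar.
Proof.
move=> J_wlsc J_cpt J_rr Jv_le JC Av_cvg.
have [psi [u0 [psi_incr [_ vu0]]]] :=
  J_cpt C v (fun n => le_trans (Jv_le n) JC).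
have u0E : u0 = ubar.
  apply: A_inj; apply: weak_cvg_unique (weak_cvg_linear A_cont vu0) _.
  exact/cvg_weak_cvg/(cvg_comp _ _ (subsequence_cvg psi_incr) Av_cvg).
rewrite u0E in vu0; exists psi => //; apply: J_rr => //.
by apply: limn_einf_ge_cvg => [|n]; [exact: J_wlsc | exact: Jv_le].
Qed.

End MinimizingSequences.

Theorem theorem3 (R : realType) (U F : completeNormedModType R)
  (leF : F -> F -> Prop) (hF : banach_lattice_order leF)
  (A : {linear U -> F}) (A_cont : continuous A) (A_inj : injective A)
  (f : F) (ubar : U) (hAu : A ubar = f)
  (fl fu : nat -> F)
  (hfl_mono : forall n, leF (fl n) (fl n.+1))
  (hfu_mono : forall n, leF (fu n.+1) (fu n))
  (hfl_le : forall n, leF (fl n) f) (hfu_ge : forall n, leF f (fu n))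
  (hgap : (fun n => `|fl n - fu n|) @ \oo --> (0 : R))
  (J : U -> \bar R)
  (hJ : (bounded_below J /\ lower_semicontinuous J /\
         level_sets_seq_compact J)
     \/ (bounded_below J /\ weakly_lsc J /\
         level_sets_weak_seq_compact J /\ radon_riesz J))
  (hJubar : (J ubar < +oo)%E)
  (u : nat -> U)
  (hu : forall n, (leF (fl n) (A (u n)) /\ leF (A (u n)) (fu n)) /\
        (forall v, leF (fl n) (A v) -> leF (A v) (fu n) -> (J (u n) <= J v)%E)) :
  u @ \oo --> ubar /\ (J \o u) @ \oo --> J ubar.
Proof.
have Ju_le n : (J (u n) <= J ubar)%E by apply: (hu n).2; rewrite hAu.
have [C JC] : exists C : R, (J ubar <= C%:E)%E.
  by case: (J ubar) hJubar => [r _|//|_]; [exists r | exists 0]; rewrite ?lexx ?leNye.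
have Au_cvg : (A \o u) @ \oo --> A ubar.
  rewrite hAu; apply: (banach_lattice_squeeze hF _ _ hgap) => n.
    exact: (hu n).1.
  by split.
have sub_cvg phi : subsequence phi ->
    exists2 psi, subsequence psi & (u \o phi \o psi) @ \oo --> ubar.
  move=> phi_incr; have Auphi_cvg : (A \o (u \o phi)) @ \oo --> A ubar.
    exact: cvg_comp (subsequence_cvg phi_incr) Au_cvg.
  case: hJ => [[_ [_ J_cpt]]|[_ [J_wlsc [J_cpt J_rr]]]].
    have JuC n : (J (u (phi n)) <= C%:E)%E := le_trans (Ju_le (phi n)) JC.
    exact: (level_compact_subseq_cvg A_cont A_inj J_cpt JuC Auphi_cvg).
  have Juphi_le n : (J (u (phi n)) <= J ubar)%E := Ju_le (phi n).
  exact: (level_weak_compact_subseq_cvg A_cont A_inj J_wlsc J_cpt J_rr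
    Juphi_le JC Auphi_cvg).
have u_cvg := cvg_subsequences sub_cvg.
split=> //; apply: limn_einf_ge_cvg Ju_le.
case: hJ => [[_ [J_lsc _]]|[_ [J_wlsc _]]].
  exact: lower_semicontinuous_le_limn_einf J_lsc u_cvg.
exact/J_wlsc/cvg_weak_cvg.
Qed.
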